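(* Let $\Psi_h$ be a composition method on the extended phase space $\mathbb{R}^{4d}$ as described in the context, with coefficients $a_1,\dots,a_s$, and consider the extended phase space integrator with symmetric projection based on $\Psi_h$. Then this integrator is an extended Runge--Kutta method and can be written as a monoimplicit symplectic Runge--Kutta method: there exist Runge--Kutta coefficients $(a_{ij})$, $(b_i)$ (depending only on $a_1,\dots,a_s$) such that the matrix $(a_{ij})$ is a rank-one matrix plus a matrix of spectral radius zero, $b_ib_j-b_ia_{ij}-b_ja_{ji}=0$ for all $i,j$, and for every Hamiltonian $H$ the symmetric projection integrator $z_0\mapsto z_1$ coincides with one step of this Runge--Kutta method applied to $\dot q=D_2H(q,p)$, $\dot p=-D_1H(q,p)$.
   Context: Let $H\colon\mathbb{R}^{2d}\to\mathbb{R}$ be smooth. On $\mathbb{R}^{4d}\ni(q,x,p,y)$ let $\hat H_A(q,x,p,y)=H(x,p)$, $\hat H_B(q,x,p,y)=H(q,y)$, with symplectic form $dq\wedge dp+dx\wedge dy$. Their flows are $\exp(tX_{\hat H_A})(q,x,p,y)=(q+tD_2H(x,p),x,p,y-tD_1H(x,p))$ and $\exp(tX_{\hat H_B})(q,x,p,y)=(q,x+tD_2H(q,y),p-tD_1H(q,y),y)$. A composition method with real coefficients $a_1,\dots,a_s$ is $\Psi_h=\phi_s\circ\cdots\circ\phi_1$ where $\phi_i=\exp(a_ihX_{\hat H_A})$ for $i$ odd and $\phi_i=\exp(a_ihX_{\hat H_B})$ for $i$ even. Let $D=\begin{bmatrix}I_d&-I_d&0&0\\0&0&I_d&-I_d\end{bmatrix}$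 and $\mathcal{N}=\ker D=\{(q,q,p,p)\}$. The extended phase space integrator with symmetric projection maps $z_0=(q_0,p_0)$ to $z_1$ as follows: $\zeta_0=(q_0,q_0,p_0,p_0)$; find $\mu\in\mathbb{R}^{2d}$ with $\Psi_h(\zeta_0+D^\top\mu)+D^\top\mu\in\mathcal{N}$; set $(q_1,q_1,p_1,p_1):=\Psi_h(\zeta_0+D^\top\mu)+D^\top\mu$ and $z_1=(q_1,p_1)$. An extended Runge--Kutta method (parameters $a_{ij}$, $1\le i\le s$, $1\le j\le m$; $b_i$; full-rank $(m-s)\times m$ matrix $d_{ij}$) for $\dot z=f(z)$ is defined by $Z_i=z_0+h\sum_{j=1}^m a_{ij}k_j$, $k_i=f(Z_i)$ ($i\le s$), $0=\sum_j d_{ij}k_j$ ($i=1,\dots,m-s$), $z_1=z_0+h\sum_{i=1}^m b_ik_i$. A Runge--Kutta method $Z_i=z_0+h\sum_ja_{ij}f(Z_j)$, $z_1=z_0+h\sum_ib_if(Z_i)$ is called monoimplicit if its matrix $(a_{ij})$ is a rank-one matrix plus a matrix of zero spectral radius; the condition $b_ib_j-b_ia_{ij}-b_ja_{ji}=0$ for all $i,j$ is the symplecticity condition for Runge--Kutta methods. *)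

From HB Require Import structures.
From mathcomp Require Import all_boot all_order all_algebra.
From mathcomp Require Import all_classical all_reals all_analysis.
From mathcomp Require Import complex.
Set Implicit Arguments. Unset Strict Implicit. Unset Printing Implicit Defensive.
Import Order.TTheory GRing.Theory Num.Theory.
Import numFieldNormedType.Exports.
Local Open Scope ring_scope.

Section Defs.
Variable R : realType.

Definition phase d := ('rV[R]_d * 'rV[R]_d)%type.

Definition D1 d (H : phase d -> R) (q p : 'rV[R]_d) : 'rV[R]_d :=
  \row_i ('D_((delta_mx 0 i : 'rV[R]_d), (0 : 'rV[R]_d)) H (q, p)).
Definition D2 d (H : phase d -> R) (q p : 'rV[R]_d) : 'rV[R]_d :=
  \row_i ('D_((0 : 'rV[R]_d), (delta_mx 0 i : 'rV[R]_d)) H (q, p)).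

Record ext d := Ext { eq_ : 'rV[R]_d; ex_ : 'rV[R]_d; ep_ : 'rV[R]_d; ey_ : 'rV[R]_d }.

Definition flowA d (H : phase d -> R) (t : R) (z : ext d) : ext d :=
  let: Ext q x p y := z in
  Ext (q + t *: D2 H x p) x p (y - t *: D1 H x p).
Definition flowB d (H : phase d -> R) (t : R) (z : ext d) : ext d :=
  let: Ext q x p y := z in
  Ext q (x + t *: D2 H q y) (p - t *: D1 H q y) y.

(** Composition method Psi_h = phi_s o ... o phi_1 with coefficients
    a = [:: a_1; ...; a_s]; phi_i = exp(a_i h X_{H_A}) for i odd,
    exp(a_i h X_{H_B}) for i even.  [odd_i] tells whether the head of the
    list has odd index. *)
Fixpoint compose_aux d (H : phase d -> R) (h : R) (odd_i : bool) (a : seq R)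
    (z : ext d) : ext d :=
  match a with
  | [::] => z
  | c :: a' => compose_aux H h (~~ odd_i) a'
                 ((if odd_i then flowA H else flowB H) (c * h) z)
  end.
Definition Psi d (H : phase d -> R) (a : seq R) (h : R) (z : ext d) : ext d :=
  compose_aux H h true a z.

(** zeta + D^T mu, for mu = (mu1, mu2):  D^T mu = (mu1, -mu1, mu2, -mu2). *)
Definition addDT d (z : ext d) (mu1 mu2 : 'rV[R]_d) : ext d :=
  let: Ext q x p y := z in Ext (q + mu1) (x - mu1) (p + mu2) (y - mu2).

Definition inN d (z : ext d) : Prop := eq_ z = ex_ z /\ ep_ z = ey_ z.

Definition sym_proj_step d (H : phase d -> R) (a : seq R) (h : R)
    (z0 z1 : phase d) : Prop :=
  exists mu1 mu2 : 'rV[R]_d,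
    let w := addDT (Psi H a h (addDT (Ext z0.1 z0.1 z0.2 z0.2) mu1 mu2)) mu1 mu2 in
    inN w /\ z1 = (eq_ w, ep_ w).

Definition hamvf d (H : phase d -> R) (z : phase d) : phase d :=
  (D2 H z.1 z.2, - D1 H z.1 z.2).

(** One step of the Runge--Kutta method (A, b) for z' = f(z):
    Z_i = z0 + h sum_j a_ij f(Z_j),  z1 = z0 + h sum_i b_i f(Z_i),
    written componentwise on the pair z = (q,p). *)
Definition rk_step m d (A : 'M[R]_m) (b : 'rV[R]_m) (f : phase d -> phase d)
    (h : R) (z0 z1 : phase d) : Prop :=
  exists Z : 'I_m -> phase d,
    (forall i, Z i = (z0.1 + h *: \sum_j A i j *: (f (Z j)).1,
                      z0.2 + h *: \sum_j A i j *: (f (Z j)).2)) /\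
    z1 = (z0.1 + h *: \sum_i b 0 i *: (f (Z i)).1,
          z0.2 + h *: \sum_i b 0 i *: (f (Z i)).2).

Definition spectral_radius_zero m (N : 'M[R]_m) : Prop :=
  forall lambda : R[i], eigenvalue (map_mx (fun x : R => (x%:C)%C) N) lambda ->
    `|lambda| = 0.

Definition monoimplicit m (A : 'M[R]_m) : Prop :=
  exists U N : 'M[R]_m, A = U + N /\ \rank U = 1%N /\ spectral_radius_zero N.

Definition rk_symplectic m (A : 'M[R]_m) (b : 'rV[R]_m) : Prop :=
  forall i j, b 0 i * b 0 j - b 0 i * A i j - b 0 j * A j i = 0.

End Defs.

From HB Require Import structures.
From mathcomp Require Import all_boot all_order all_algebra.
From mathcomp Require Import all_classical all_reals all_analysis.
From mathcomp Require Import complex.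
From mathcomp Require Import ring lra.
Set Implicit Arguments. Unset Strict Implicit. Unset Printing Implicit Defensive.
Import Order.TTheory GRing.Theory Num.Theory.
Import numFieldNormedType.Exports.
Local Open Scope ring_scope.

(* Write a point (q, x, p, y) of the extended phase space as the pair (P, Q) = ((q, y), (x, p)) of
   phase-space points.  Then exp(t X_{H_A}) is the Euler step P += t f(Q) and exp(t X_{H_B}) is
   Q += t f(P), f being the Hamiltonian vector field, and adding D^T mu moves P and Q by opposite
   amounts -nu and +nu.  Hence the points W_k at which the k-th flow evaluates f satisfy
     W_k = z0 + (-1)^k nu + h sum_{j < k, j and k of different parity} a_j f(W_j),
   and projecting back onto N forces 4 nu = h sum_j (-1)^j a_j f(W_j), with output
   z1 = z0 + h sum_j (a_j / 2) f(W_j).  Eliminating nu gives a Runge-Kutta method with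
   b_j = a_j / 2 and A = U + N, where U_kj = (-1)^(k+j) a_j / 4 has rank one and N is strictly
   lower triangular; the symplecticity condition reduces to a parity check.  When every a_j
   vanishes both sides just say z1 = z0, which a rank-one explicit method with b = 0 also does.
   The argument is purely algebraic: no smoothness of H is used. *)

Lemma strictly_lower_spectral_radius_zero (R : realType) m (N : 'M[R]_m) :
  (forall i j : 'I_m, (i <= j)%N -> N i j = 0) -> spectral_radius_zero N.
Proof.
move=> N_lower lambda; set NC := map_mx _ N.
have NC_lower (i j : 'I_m) : (i <= j)%N -> NC i j = 0 by move=> ij; rewrite mxE N_lower.
have NC_trig : is_trig_mx NC by apply/is_trig_mxP => i j /ltnW; apply: NC_lower.
rewrite eigenvalue_root_char (char_poly_trig NC_trig).
rewrite (eq_bigr (fun=> 'X)) => [|i _]; last by rewrite NC_lower // subr0.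
by rewrite prodr_const rootE hornerXn expf_eq0 => /andP[_ /eqP ->]; rewrite normr0.
Qed.

Lemma mxrank_col_mul_row (F : fieldType) m n (u : 'cV[F]_m) (v : 'rV[F]_n) :
  u != 0 -> v != 0 -> \rank (u *m v) = 1%N.
Proof.
move=> u_nz v_nz; rewrite mxrankMfree; last by rewrite /row_free rank_rV v_nz.
by rewrite -mxrank_tr rank_rV trmx_eq0 u_nz.
Qed.

Section RungeKuttaStages.
Variables (R : realType) (d : nat).
Local Notation V := (phase R d).

Lemma phase_eqP (x y : V) :
  x = y <-> forall i, x.1 0 i = y.1 0 i /\ x.2 0 i = y.2 0 i.
Proof.
case: x y => [x1 x2] [y1 y2]; split=> [[-> ->] // | xy].
by congr pair; apply/rowP => i; have [] := xy i.
Qed.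

Lemma rk_step_natE n (c : nat -> nat -> R) (w : nat -> R) (f : V -> V) h z0 z1 :
  rk_step (\matrix_(i < n, j < n) c i j) (\row_(j < n) w j) f h z0 z1 <->
  exists Z : nat -> V,
    (forall k, (k < n)%N -> Z k = z0 + h *: \sum_(0 <= j < n) c k j *: f (Z j)) /\
    z1 = z0 + h *: \sum_(0 <= j < n) w j *: f (Z j).
Proof.
have sumE (F : 'I_n -> R) (g : 'I_n -> V) :
    z0 + h *: \sum_j F j *: g j = (z0.1 + h *: \sum_j F j *: (g j).1,
                                   z0.2 + h *: \sum_j F j *: (g j).2).
  by rewrite [LHS]surjective_pairing /= !raddf_sum.
split=> [[Z [Zstage ->]] | [Z [Zstage ->]]].
  pose Zn j := if insub j is Some o then Z o else 0.
  have ZnE (o : 'I_n) : Zn o = Z o by rewrite /Zn valK.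
  exists Zn; split=> [k kn|]; rewrite big_mkord.
    rewrite -[k]/(val (Ordinal kn)) ZnE Zstage sumE.
    by congr (_ + _ *: _, _ + _ *: _); apply: eq_bigr => j _; rewrite mxE ZnE.
  by rewrite sumE; congr (_ + _ *: _, _ + _ *: _); apply: eq_bigr => j _; rewrite mxE ZnE.
exists (fun o => Z o); split=> [k|].
  rewrite Zstage // big_mkord sumE.
  by congr (_ + _ *: _, _ + _ *: _); apply: eq_bigr => j _; rewrite mxE.
by rewrite big_mkord sumE; congr (_ + _ *: _, _ + _ *: _); apply: eq_bigr => j _; rewrite mxE.
Qed.

End RungeKuttaStages.

Section SymProjCoefficients.
Variables (R : realType) (a : seq R).
Local Notation n := (size a).

Definition sym_proj_rk_coef (k j : nat) : R :=
  (-1) ^+ k * ((-1) ^+ j * a`_j / 4) + ((j < k)%N && (odd j != odd k))%:R * a`_j.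

Definition sym_proj_rk_A : 'M[R]_n := \matrix_(k, j) sym_proj_rk_coef k j.
Definition sym_proj_rk_b : 'rV[R]_n := \row_j (a`_j / 2).

Lemma sym_proj_rk_symplectic : rk_symplectic sym_proj_rk_A sym_proj_rk_b.
Proof.
move=> i j; rewrite !mxE /sym_proj_rk_coef -[(-1) ^+ i]signr_odd -[(-1) ^+ j]signr_odd.
case: (ltngtP i j) => [ij | ji | /val_inj ->]; rewrite ?ltnn //=.
- by case: (odd i); case: (odd j); rewrite /= ?expr0 ?expr1; lra.
- by case: (odd i); case: (odd j); rewrite /= ?expr0 ?expr1; lra.
- by case: (odd j); rewrite /= ?expr0 ?expr1; lra.
Qed.

Lemma sym_proj_rk_monoimplicit : has (predC1 0) a -> monoimplicit sym_proj_rk_A.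
Proof.
case/hasP=> c c_in c_nz.
pose u : 'cV[R]_n := \col_k (-1) ^+ k.
pose v : 'rV[R]_n := \row_j ((-1) ^+ j * a`_j / 4).
pose N : 'M[R]_n := \matrix_(k, j) (((j < k)%N && (odd j != odd k))%:R * a`_j).
have j_lt : (index c a < n)%N by rewrite index_mem.
exists (u *m v), N; split; [|split].
- by apply/matrixP => k j; rewrite !mxE big_ord1 !mxE.
- apply: mxrank_col_mul_row; apply/eqP => /matrixP.
    by move/(_ (Ordinal j_lt) 0); rewrite !mxE; apply/eqP; rewrite signr_eq0.
  move/(_ 0 (Ordinal j_lt)); rewrite !mxE nth_index //; apply/eqP.
  by rewrite !mulf_neq0 ?signr_eq0 ?invr_eq0 ?pnatr_eq0.
- apply: strictly_lower_spectral_radius_zero => k j kj.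
  by rewrite mxE ltnNge kj mul0r.
Qed.

Lemma sum_sym_proj_rk_coef (V : lmodType R) (u : nat -> V) k : (k <= n)%N ->
  \sum_(0 <= j < n) sym_proj_rk_coef k j *: u j =
  ((-1) ^+ k / 4) *: \sum_(0 <= j < n) ((-1) ^+ j * a`_j) *: u j +
  \sum_(0 <= j < k | odd j != odd k) a`_j *: u j.
Proof.
move=> kn; rewrite scaler_sumr (big_nat_widen _ _ _ _ _ kn).
rewrite [X in _ + X]big_mkcond -big_split; apply: eq_bigr => j _ /=.
rewrite scalerDl scalerA andbC; congr (_ *: _ + _); first by ring.
by case: (_ && _); rewrite ?mul1r ?mul0r ?scale0r.
Qed.

Lemma sum_sign_parity (V : lmodType R) (u : nat -> V) m :
  \sum_(0 <= j < m) ((-1) ^+ j * a`_j) *: u j =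
  \sum_(0 <= j < m | ~~ odd j) a`_j *: u j - \sum_(0 <= j < m | odd j) a`_j *: u j.
Proof.
rewrite (bigID odd) addrC /= -sumrN; congr (_ + _).
  by apply: eq_bigr => j j_odd; rewrite -signr_odd j_odd mulN1r scaleNr.
by apply: eq_bigr => j /negbTE j_even; rewrite -signr_odd j_even mul1r.
Qed.

Lemma sum_half_parity (V : lmodType R) (u : nat -> V) m :
  \sum_(0 <= j < m) (a`_j / 2) *: u j =
  2^-1 *: (\sum_(0 <= j < m | ~~ odd j) a`_j *: u j + \sum_(0 <= j < m | odd j) a`_j *: u j).
Proof.
rewrite (bigID odd) addrC /= scalerDr !scaler_sumr.
by congr (_ + _); apply: eq_bigr => j _; rewrite scalerA mulrC.
Qed.

End SymProjCoefficients.

Lemma compose_aux_rcons (R : realType) d (H : phase R d -> R) h odd_i l c z :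
  compose_aux H h odd_i (rcons l c) z =
  (if odd_i (+) odd (size l) then flowA H else flowB H) (c * h) (compose_aux H h odd_i l z).
Proof. by elim: l odd_i z => [|x l IH] odd_i z /=; rewrite ?addbF // IH addbN -addNb. Qed.

Section ExtendedPhaseSpace.
Variables (R : realType) (d : nat) (H : phase R d -> R).
Local Notation V := (phase R d).
Local Notation f := (hamvf H).

Definition ext_of (P Q : V) : ext R d := Ext P.1 Q.1 Q.2 P.2.
Definition ext_P (z : ext R d) : V := (eq_ z, ey_ z).
Definition ext_Q (z : ext R d) : V := (ex_ z, ep_ z).

Lemma ext_PE P Q : ext_P (ext_of P Q) = P. Proof. by case: P. Qed.
Lemma ext_QE P Q : ext_Q (ext_of P Q) = Q. Proof. by case: Q. Qed.

Lemma flow_ext_of (b : bool) t P Q :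
  (if b then flowA H else flowB H) t (ext_of P Q) =
  if b then ext_of (P + t *: f Q) Q else ext_of P (Q + t *: f P).
Proof. by case: b; rewrite /ext_of /= scalerN. Qed.

Lemma addDT_ext_of P Q (nu : V) :
  addDT (ext_of P Q) (- nu.1) nu.2 = ext_of (P - nu) (Q + nu).
Proof. by rewrite /ext_of /= opprK. Qed.

Lemma inN_ext_of P Q : inN (ext_of P Q) <-> P = Q.
Proof.
by case: P Q => [q y] [x p]; split=> [[/= -> ->] | [-> ->]].
Qed.

Variables (a : seq R) (h : R).
Local Notation n := (size a).

Definition partial_flow (z : ext R d) k := compose_aux H h true (take k a) z.

(* The point W_k of the header; steps are numbered from 0, so even k are H_A-steps. *)
Definition stage_point (P Q : V) k : V :=
  (if odd k then ext_P else ext_Q) (partial_flow (ext_of P Q) k).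

Lemma partial_flow_ext_of P Q k : (k <= n)%N ->
  partial_flow (ext_of P Q) k =
  ext_of (P + h *: \sum_(0 <= j < k | ~~ odd j) a`_j *: f (stage_point P Q j))
         (Q + h *: \sum_(0 <= j < k | odd j) a`_j *: f (stage_point P Q j)).
Proof.
elim: k => [|k IH] ka; first by rewrite /partial_flow take0 !big_geq // !scaler0 !addr0.
rewrite /partial_flow (take_nth 0 ka) compose_aux_rcons (size_takel (ltnW ka)) addTb.
rewrite -/(partial_flow _ k) (IH (ltnW ka)).
rewrite !(big_mkcond (fun j => ~~ odd j)) !(big_mkcond (fun j => odd j)) !big_nat_recr //.
rewrite -!(big_mkcond (fun j => ~~ odd j)) -!(big_mkcond (fun j => odd j)).
rewrite [stage_point P Q k]/stage_point -/(partial_flow _ k) (IH (ltnW ka)).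
by rewrite flow_ext_of; case: (odd k) => /=;
  rewrite ?ext_PE ?ext_QE addr0 scalerDr addrA scalerA mulrC.
Qed.

Local Notation W := stage_point.

Lemma stage_pointE P Q k : (k <= n)%N ->
  W P Q k = (if odd k then P else Q) +
            h *: \sum_(0 <= j < k | odd j != odd k) a`_j *: f (W P Q j).
Proof.
move=> kn; rewrite {1}/stage_point partial_flow_ext_of //.
by case: (odd k); rewrite ?ext_PE ?ext_QE; congr (_ + _ *: _); apply: eq_bigl => j;
  case: (odd j).
Qed.

Lemma Psi_ext_of P Q :
  Psi H a h (ext_of P Q) =
  ext_of (P + h *: \sum_(0 <= j < n | ~~ odd j) a`_j *: f (W P Q j))
         (Q + h *: \sum_(0 <= j < n | odd j) a`_j *: f (W P Q j)).
Proof. by have := partial_flow_ext_of P Q (leqnn n); rewrite /partial_flow take_size. Qed.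

Lemma sym_proj_stepE z0 z1 :
  sym_proj_step H a h z0 z1 <->
  exists nu : V, let u j := f (W (z0 - nu) (z0 + nu) j) in
    nu = (h / 4) *: \sum_(0 <= j < n) ((-1) ^+ j * a`_j) *: u j /\
    z1 = z0 + h *: \sum_(0 <= j < n) (a`_j / 2) *: u j.
Proof.
have balance (nu SE SO : V) :
    z0 - nu + h *: SE - nu = z0 + nu + h *: SO + nu <-> nu = (h / 4) *: (SE - SO).
  rewrite !phase_eqP /=; split=> eq_nu i; have [] := eq_nu i; rewrite !mxE => e1 e2; split; lra.
have output (nu SE SO : V) : nu = (h / 4) *: (SE - SO) ->
    ((z0 - nu + h *: SE - nu).1, (z0 + nu + h *: SO + nu).2) = z0 + h *: (2^-1 *: (SE + SO)).
  move=> ->; apply/phase_eqP => i /=; rewrite !mxE; split; lra.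
rewrite /sym_proj_step -[Ext _ _ _ _]/(ext_of z0 z0).
split=> [[mu1 [mu2 []]] | [nu []]].
  have [nu -> ->] : exists2 nu : V, mu1 = - nu.1 & mu2 = nu.2.
    by exists (- mu1, mu2); rewrite /= ?opprK.
  rewrite !addDT_ext_of Psi_ext_of !addDT_ext_of inN_ext_of => /balance nu_eq ->.
  exists nu; rewrite sum_sign_parity sum_half_parity; split=> //.
  exact: output.
rewrite sum_sign_parity sum_half_parity => nu_eq ->.
exists (- nu.1), nu.2; split.
  by rewrite !addDT_ext_of Psi_ext_of !addDT_ext_of inN_ext_of; apply/balance.
by rewrite !addDT_ext_of Psi_ext_of !addDT_ext_of; symmetry; apply: output.
Qed.

Lemma sym_proj_step_rk z0 z1 :
  sym_proj_step H a h z0 z1 <-> rk_step (sym_proj_rk_A a) (sym_proj_rk_b a) f h z0 z1.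
Proof.
rewrite sym_proj_stepE (rk_step_natE n (sym_proj_rk_coef a) (fun j => a`_j / 2)).
have shift (nu : V) k : (if odd k then z0 - nu else z0 + nu) = z0 + (-1) ^+ k *: nu.
  by rewrite -signr_odd; case: (odd k); rewrite /= ?expr0 ?expr1 ?scaleN1r ?scale1r.
have stage_eq (nu : V) (u : nat -> V) k : (k < n)%N ->
    nu = (h / 4) *: \sum_(0 <= j < n) ((-1) ^+ j * a`_j) *: u j ->
    z0 + h *: \sum_(0 <= j < n) sym_proj_rk_coef a k j *: u j =
    z0 + (-1) ^+ k *: nu + h *: \sum_(0 <= j < k | odd j != odd k) a`_j *: u j.
  move=> kn ->; rewrite sum_sym_proj_rk_coef ?(ltnW kn) // scalerDr addrA !scalerA.
  by congr (z0 + _ *: _ + _); ring.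
split=> [[nu [nu_eq ->]] | [Z [Z_stage ->]]].
  exists (W (z0 - nu) (z0 + nu)); split=> // k kn.
  by rewrite (stage_eq _ _ _ kn nu_eq) stage_pointE ?shift // ltnW.
pose nu : V := (h / 4) *: \sum_(0 <= j < n) ((-1) ^+ j * a`_j) *: f (Z j).
have W_Z k : (k < n)%N -> W (z0 - nu) (z0 + nu) k = Z k.
  elim/ltn_ind: k => k IH kn.
  rewrite Z_stage // (stage_eq nu (fun j => f (Z j)) _ kn erefl).
  rewrite stage_pointE ?shift; last exact: ltnW.
  congr (_ + _ *: _); apply: congr_big_nat => // j /andP[_ /andP[_ jk]].
  by rewrite IH // (ltn_trans jk kn).
have sum_W_Z (c : nat -> R) :
    \sum_(0 <= j < n) c j *: f (W (z0 - nu) (z0 + nu) j) = \sum_(0 <= j < n) c j *: f (Z j).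
  by apply: eq_big_nat => j /andP[_ jn]; rewrite W_Z.
by exists nu; rewrite /= !sum_W_Z.
Qed.

Lemma sym_proj_step_zero z0 z1 : ~~ has (predC1 0) a ->
  sym_proj_step H a h z0 z1 <-> z1 = z0.
Proof.
move=> /hasPn a_zero; have a_j0 j : a`_j = 0.
  have [jn | jn] := ltnP j n; last exact: nth_default.
  by apply/eqP; rewrite -[_ == _]negbK; apply: a_zero; apply: mem_nth.
rewrite sym_proj_stepE; split=> [[nu [_ ->]] | ->].
  by rewrite big1 ?scaler0 ?addr0 // => j _; rewrite a_j0 mul0r scale0r.
by exists 0; split; rewrite big1 ?scaler0 ?addr0 // => j _; rewrite a_j0 ?mulr0 ?mul0r scale0r.
Qed.

End ExtendedPhaseSpace.

Lemma rk_step_delta01 (R : realType) d (f : phase R d -> phase R d) h z0 z1 :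
  rk_step (delta_mx 0 1 : 'M[R]_2) 0 f h z0 z1 <-> z1 = z0.
Proof.
have -> : delta_mx 0 1 =
    \matrix_(i < 2, j < 2) (((i : nat) == 0%N) && ((j : nat) == 1%N))%:R :> 'M[R]_2.
  by apply/matrixP => i j; rewrite !mxE.
have -> : 0 = \row_(j < 2) (0 : R) by apply/rowP => j; rewrite !mxE.
rewrite (rk_step_natE 2 (fun i j => ((i == 0%N) && (j == 1%N))%:R) (fun=> 0)).
split=> [[Z [_ ->]] | ->].
  by rewrite big1 ?scaler0 ?addr0 // => j _; rewrite scale0r.
exists (fun k => if k == 0%N then z0 + h *: f z0 else z0); split=> [k|].
  by case: k => [|[|//]] _;
    rewrite !big_nat_recr //= big_geq // !scale0r ?scale1r !add0r ?scaler0 ?addr0.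
by rewrite big1 ?scaler0 ?addr0 // => j _; rewrite scale0r.
Qed.

Theorem proposition4 (R : realType) (a : seq R) :
  exists (m : nat) (A : 'M[R]_m) (b : 'rV[R]_m),
    monoimplicit A /\ rk_symplectic A b /\
    forall (d : nat) (H : phase R d -> R),
      (forall z : phase R d, differentiable H z) ->
      forall (h : R) (z0 z1 : phase R d),
        sym_proj_step H a h z0 z1 <-> rk_step A b (hamvf H) h z0 z1.
Proof.
have [a_nz | a_zero] := boolP (has (predC1 0) a).
  exists (size a), (sym_proj_rk_A a), (sym_proj_rk_b a); split; [|split].
  - exact: sym_proj_rk_monoimplicit.
  - exact: sym_proj_rk_symplectic.
  - by move=> d H _ h z0 z1; apply: sym_proj_step_rk.
exists 2%N, (delta_mx 0 1), 0; split; [|split].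
- exists (delta_mx 0 1), 0; rewrite addr0 mxrank_delta; do 2!split=> //.
  by apply: strictly_lower_spectral_radius_zero => i j _; rewrite mxE.
- by move=> i j; rewrite !mxE !mul0r !subr0.
- by move=> d H _ h z0 z1; rewrite sym_proj_step_zero // rk_step_delta01.
Qed.
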